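(* Let $\omega_a,\omega_c,\kappa,\lambda>0$, $N>0$ and $K\in\mathbb{R}$. Consider, for $(Q,P,X,Y)$ in a neighbourhood of the origin with $X^2+Y^2<\tfrac14$, the system of ordinary differential equations \begin{align*} \dot Q&=\omega_c P-\kappa Q+KN\,P\,(Q^2+P^2),\\ \dot P&=-\omega_c Q-\kappa P-2\sqrt{2}\,\lambda X-KN\,Q\,(Q^2+P^2),\\ \dot X&=-\omega_a Y,\\ \dot Y&=\omega_a X-2\sqrt{2}\,\lambda\, Z\, Q,\qquad Z:=-\sqrt{\tfrac14-X^2-Y^2}. \end{align*} The origin $(Q,P,X,Y)=(0,0,0,0)$ is a fixed point. Let $J$ be the Jacobian matrix of the vector field at the origin. Then all eigenvalues of $J$ have strictly negative real part if and only if $$\frac{4\lambda^2}{\omega_a\omega_c}<1+\Big(\frac{\kappa}{\omega_c}\Big)^2 .$$ In particular, this condition does not depend on $K$.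
   Context: This is the mean-field dynamics of the dissipative quantum Rabi model with Kerr nonlinearity $H/\hbar=\omega_c a^\dagger a+\omega_a S_z+\frac{\lambda}{\sqrt N}(S_++S_-)(a+a^\dagger)+K(a^\dagger)^2a^2$ with cavity loss rate $\kappa$: $Q=\sqrt2\,\mathrm{Re}\,\alpha$, $P=\sqrt2\,\mathrm{Im}\,\alpha$ with $\alpha=\langle a\rangle/\sqrt N$, and $(X,Y,Z)=(\langle S_x\rangle,\langle S_y\rangle,\langle S_z\rangle)/N$ constrained to $X^2+Y^2+Z^2=\tfrac14$; the origin corresponds to the normal phase $Q=P=X=Y=0$, $Z=-\tfrac12$. *)

From HB Require Import structures.
From mathcomp Require Import all_boot all_order all_algebra.
From mathcomp Require Import all_classical all_reals.
From mathcomp Require Import topology normedtype derive.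
From mathcomp Require Import complex.
Set Implicit Arguments. Unset Strict Implicit. Unset Printing Implicit Defensive.
Import Order.TTheory GRing.Theory Num.Theory.
Local Open Scope ring_scope.

Definition coord4 {R : realType} (p : 'rV[R]_4) (k : nat) : R := p ord0 (inord k).

Definition Zof {R : realType} (p : 'rV[R]_4) : R :=
  - Num.sqrt (4^-1 - coord4 p 2 ^+ 2 - coord4 p 3 ^+ 2).

Definition rabi_field {R : realType} (wa wc kappa lambda N K : R)
    (p : 'rV[R]_4) : 'rV[R]_4 :=
  let Q := coord4 p 0 in let P := coord4 p 1 in
  let X := coord4 p 2 in let Y := coord4 p 3 in
  let Z := Zof p in
  \row_(i < 4) nth 0
    [:: wc * P - kappa * Q + K * N * P * (Q ^+ 2 + P ^+ 2);
        - wc * Q - kappa * P - 2 * Num.sqrt 2 * lambda * X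
          - K * N * Q * (Q ^+ 2 + P ^+ 2);
        - wa * Y;
        wa * X - 2 * Num.sqrt 2 * lambda * Z * Q] i.

(* At the origin [Z = -1/2] and the Kerr term is cubic, so [K] drops out of the
   Jacobian. An eigenvector [(q, p, x, y)] of the linearisation has [q <> 0], and
   eliminating [p, x, y] shows that the eigenvalues are exactly the roots of
   [((z + kappa)^2 + wc^2) (z^2 + wa^2) = M] with [M = 4 wa wc lambda^2].
   Write [A = (z + kappa)^2 + wc^2] and [B = z^2 + wa^2]. If [z = a + ib] is a root,
   [A B = M] is real, which forces [Im A |B|^2 = - M Im B], i.e.
   [b ((a + kappa) |B|^2 + M a) = 0]; for [a >= 0] this is only possible when
   [b = 0], and then [M] is at least the value [(kappa^2 + wc^2) wa^2] at [0].
   Conversely, if [M] is at least that value, the quartic reaches [M] at some real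
   [t >= 0] by the intermediate value theorem. *)

From HB Require Import structures.
From mathcomp Require Import all_boot all_order all_algebra.
From mathcomp Require Import all_classical all_reals.
From mathcomp Require Import topology normedtype derive realfun.
From mathcomp Require Import complex ring lra polyrcf.
Set Implicit Arguments. Unset Strict Implicit.
Import Order.TTheory GRing.Theory Num.Theory.
Import numFieldNormedType.Exports.
Local Open Scope ring_scope.

Definition rabi_quartic {F : pzRingType} (kappa wa wc z : F) : F :=
  ((z + kappa) ^+ 2 + wc ^+ 2) * (z ^+ 2 + wa ^+ 2).

Section LinearisedRabi.
Variable F : fieldType.

Definition row4 (q p x y : F) : 'rV[F]_4 := \row_j nth 0 [:: q; p; x; y] j.

Lemma row4_eta (v : 'rV[F]_4) :
  v = row4 (v ord0 (inord 0)) (v ord0 (inord 1)) (v ord0 (inord 2)) (v ord0 (inord 3)).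
Proof.
apply/rowP => -[[|[|[|[|j]]]] lt_j4] //; rewrite mxE /=;
  by congr (v _ _); apply: val_inj; rewrite /= inordK.
Qed.

Lemma row4_inj q p x y q' p' x' y' : row4 q p x y = row4 q' p' x' y' ->
  [/\ q = q', p = p', x = x' & y = y'].
Proof.
move=> eqv; have coord k := congr1 (fun v : 'rV_4 => v ord0 (inord k)) eqv.
by move: (coord 0%N) (coord 1%N) (coord 2%N) (coord 3%N); rewrite !mxE !inordK.
Qed.

Lemma scale_row4 z q p x y : z *: row4 q p x y = row4 (z * q) (z * p) (z * x) (z * y).
Proof. by apply/rowP => -[[|[|[|[|j]]]] lt_j4]; rewrite !mxE. Qed.

Lemma row4_eq0 q p x y : (row4 q p x y == 0) = [&& q == 0, p == 0, x == 0 & y == 0].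
Proof.
have <- : row4 0 0 0 0 = 0 by apply/rowP => -[[|[|[|[|j]]]] lt_j4]; rewrite !mxE.
by apply/eqP/and4P => [/row4_inj [-> -> -> ->] | [/eqP-> /eqP-> /eqP-> /eqP->]].
Qed.

Variables wa wc kappa c z0 : F.

(* [jacobian] acts on row vectors: [jac_mx] is the transpose of the textbook
   Jacobian, and [row4_mul_jac_mx] is the linearised vector field. *)
Definition jac_mx : 'M[F]_4 := \matrix_(i, j) nth 0 (nth [::]
  [:: [:: -kappa; -wc; 0; - c * z0];
      [:: wc; -kappa; 0; 0];
      [:: 0; -c; 0; wa];
      [:: 0; 0; -wa; 0]] i) j.

Lemma row4_mul_jac_mx q p x y : row4 q p x y *m jac_mx =
  row4 (wc * p - kappa * q) (- wc * q - kappa * p - c * x) (- wa * y) (wa * x - c * z0 * q).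
Proof.
apply/rowP => -[[|[|[|[|j]]]] lt_j4] //;
  rewrite !mxE !big_ord_recl big_ord0 !mxE /=; ring.
Qed.

Hypotheses (wa_neq0 : wa != 0) (wc_neq0 : wc != 0) (c_neq0 : c != 0).

Lemma eigenvalue_jac_mx z :
  eigenvalue jac_mx z <-> rabi_quartic kappa wa wc z = - (wa * wc * c ^+ 2 * z0).
Proof.
rewrite /rabi_quartic; split.
- case/eigenvalueP => v; rewrite [v]row4_eta row4_mul_jac_mx scale_row4.
  set q := v ord0 (inord 0); set p := v ord0 (inord 1).
  set x := v ord0 (inord 2); set y := v ord0 (inord 3).
  case/row4_inj => eq_q eq_p eq_x eq_y nz_v.
  have nz_q : q != 0.
    apply: contraNneq nz_v => q0; rewrite row4_eq0 q0 eqxx /=.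
    have p0 : p = 0.
      apply: (mulfI wc_neq0); have : wc * p = z * q + kappa * q by rewrite -eq_q; ring.
      by rewrite q0 => ->; ring.
    have x0 : x = 0.
      apply: (mulfI c_neq0); have : c * x = - wc * q - kappa * p - z * p by rewrite -eq_p; ring.
      by rewrite q0 p0 => ->; ring.
    have y0 : y = 0.
      apply: (mulfI wa_neq0); have : wa * y = - (z * x) by rewrite -eq_x; ring.
      by rewrite x0 => ->; ring.
    by rewrite p0 x0 y0 eqxx.
  apply: (mulIf nz_q); apply/eqP; rewrite -subr_eq0; apply/eqP.
  (* The quartic equation times [q], as a combination of the eigenvector equations. *)
  rewrite (_ : _ - _ = (z ^+ 2 + wa ^+ 2) * ((z + kappa) * (z * q - (wc * p - kappa * q))
      + wc * (z * p - (- wc * q - kappa * p - c * x)))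
      - wc * c * (z * (z * x - - wa * y) - wa * (z * y - (wa * x - c * z0 * q)))); last by ring.
  by rewrite eq_q eq_p eq_x eq_y !subrr; ring.
- (* Take [q = 1] and solve the first three equations; the last one is [char_z]. *)
  move=> char_z; apply/eigenvalueP.
  pose x := - (((z + kappa) ^+ 2 + wc ^+ 2) / (wc * c)).
  exists (row4 1 ((z + kappa) / wc) x (- (z * x / wa))); last first.
    by rewrite row4_eq0 oner_eq0.
  rewrite row4_mul_jac_mx scale_row4 /x; congr row4; last first.
    have -> : z0 = - (((z + kappa) ^+ 2 + wc ^+ 2) * (z ^+ 2 + wa ^+ 2)) / (wa * wc * c ^+ 2).
      by rewrite char_z; field; rewrite wa_neq0 wc_neq0 c_neq0.
    by field; rewrite wa_neq0 wc_neq0 c_neq0.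
  all: by field; rewrite ?wa_neq0 ?wc_neq0 ?c_neq0.
Qed.
End LinearisedRabi.

Lemma map_jac_mx (F F' : fieldType) (f : {rmorphism F -> F'}) (wa wc kappa c z0 : F) :
  map_mx f (jac_mx wa wc kappa c z0) = jac_mx (f wa) (f wc) (f kappa) (f c) (f z0).
Proof.
apply/matrixP => -[[|[|[|[|i]]]] lt_i4] -[[|[|[|[|j]]]] lt_j4] //;
  by rewrite !mxE /= ?(rmorph0, rmorphN, rmorphM).
Qed.

Section QuarticRoots.
Variables (R : rcfType) (kappa wa wc M : R).
Hypotheses (kappa_gt0 : 0 < kappa) (wa_gt0 : 0 < wa) (M_gt0 : 0 < M).

Local Open Scope complex_scope.

Lemma Re_rabi_quartic_root_lt0 (z : R[i]) : M < rabi_quartic kappa wa wc 0 ->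
  rabi_quartic kappa%:C wa%:C wc%:C z = M%:C -> complex.Re z < 0.
Proof.
case: z => a b /= lt_M root_z; rewrite ltNge; apply/negP => a_ge0.
pose Ar := (a + kappa) ^+ 2 - b ^+ 2 + wc ^+ 2; pose Ai := 2 * (a + kappa) * b.
pose Br := a ^+ 2 - b ^+ 2 + wa ^+ 2; pose Bi := 2 * a * b.
have [eRe eIm] : Ar * Br - Ai * Bi = M /\ Ar * Bi + Ai * Br = 0.
  move: root_z; rewrite /rabi_quartic -!complexr0 !expr2; simpc => -[<- <-].
  by split; rewrite /Ar /Ai /Br /Bi; ring.
have : 2 * (b * ((a + kappa) * (Br ^+ 2 + Bi ^+ 2) + M * a)) = Br * (Ar * Bi + Ai * Br).
  by rewrite -eRe /Ai /Bi; ring.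
rewrite eIm mulr0 => /eqP; rewrite !mulf_eq0 pnatr_eq0 /= => /orP[/eqP b0 | /eqP Im0].
  have eq_a : rabi_quartic kappa wa wc a = M.
    by rewrite -eRe /Ar /Ai /Br /Bi b0 /rabi_quartic; ring.
  have : rabi_quartic kappa wa wc 0 <= rabi_quartic kappa wa wc a.
    rewrite /rabi_quartic add0r [0 ^+ 2]expr2 mul0r add0r.
    rewrite ler_pM ?addr_ge0 ?sqr_ge0 ?lerD2r ?lerDr ?sqr_ge0 //.
    by rewrite ler_sqr ?lerDr ?nnegrE ?addr_ge0 // ltW.
  by move=> /(lt_le_trans lt_M); rewrite eq_a ltxx.
have : Br ^+ 2 + Bi ^+ 2 = 0.
  apply/eqP; rewrite eq_le addr_ge0 ?sqr_ge0 // andbT.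
  have a_kappa_gt0 : 0 < a + kappa by rewrite ltr_wpDl.
  rewrite -(pmulr_rle0 _ a_kappa_gt0).
  have -> : (a + kappa) * (Br ^+ 2 + Bi ^+ 2) = - (M * a).
    by rewrite -[LHS](addrK (M * a)) Im0 sub0r.
  by rewrite oppr_le0 mulr_ge0 // ltW.
move/eqP; rewrite paddr_eq0 ?sqr_ge0 // !sqrf_eq0 => /andP[/eqP Br0 /eqP Bi0].
by move: eRe M_gt0; rewrite Br0 Bi0 !mulr0 subr0 => <-; rewrite ltxx.
Qed.

Lemma rabi_quartic_nonneg_root :
  rabi_quartic kappa wa wc 0 <= M -> exists2 t, 0 <= t & rabi_quartic kappa wa wc t = M.
Proof.
move=> le_q0M.
pose p : {poly R} := (('X + kappa%:P) ^+ 2 + (wc ^+ 2)%:P) * ('X ^+ 2 + (wa ^+ 2)%:P) - M%:P.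
have pE t : p.[t] = rabi_quartic kappa wa wc t - M by rewrite /p !hornerE.
(* Already [(b + kappa)^2 >= 2 b kappa] lifts the quartic above [M] at this [b]. *)
have [b b_ge0 Mb] : exists2 b, 0 <= b & M = 2 * b * kappa * wa ^+ 2.
  exists (M / (2 * kappa * wa ^+ 2)); last by field; rewrite !gt_eqF.
  by rewrite divr_ge0 ?ltW // !mulr_gt0 // exprn_gt0.
have sign_p : p.[0] <= 0 <= p.[b].
  rewrite !pE subr_le0 le_q0M subr_ge0 Mb /=.
  rewrite /rabi_quartic; apply: ler_pM.
  - by apply/mulr_ge0/ltW/kappa_gt0; rewrite mulr_ge0 ?ler0n.
  - exact: sqr_ge0.
  - have : 0 <= b ^+ 2 + kappa ^+ 2 + wc ^+ 2 by rewrite !addr_ge0 ?sqr_ge0.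
    have -> : (b + kappa) ^+ 2 = b ^+ 2 + 2 * b * kappa + kappa ^+ 2 by ring.
    lra.
  - by rewrite lerDr sqr_ge0.
have [t /andP[t_ge0 _] /rootP] := poly_ivt b_ge0 sign_p.
by rewrite pE => /eqP; rewrite subr_eq0 => /eqP; exists t.
Qed.

Lemma rabi_quartic_roots_Re_lt0 :
  (forall z : R[i], rabi_quartic kappa%:C wa%:C wc%:C z = M%:C -> complex.Re z < 0) <->
  M < rabi_quartic kappa wa wc 0.
Proof.
split => [stable | lt_M z]; last exact: Re_rabi_quartic_root_lt0.
rewrite ltNge; apply/negP => /rabi_quartic_nonneg_root [t t_ge0 root_t].
have /stable : rabi_quartic kappa%:C wa%:C wc%:C t%:C = M%:C.
  by rewrite -root_t /rabi_quartic !(rmorphM, rmorphD, rmorphXn).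
by rewrite /= ltNge t_ge0.
Qed.

End QuarticRoots.

Section RabiJacobian.
Variable R : realType.
Implicit Types (x : 'rV[R]_4).

Lemma is_diff_coord4 x k :
  is_diff x (fun p => coord4 p k) (fun v => coord4 v k).
Proof.
have lin : linear (fun p : 'rV[R]_4 => coord4 p k) by move=> a u v; rewrite /coord4 !mxE.
pose L : {linear 'rV[R]_4 -> R} := HB.pack (fun p : 'rV[R]_4 => coord4 p k)
  (GRing.isLinear.Build _ _ _ _ _ lin).
have L_cont : continuous L by move=> y; exact: coord_continuous.
rewrite -[fun p => _]/(L : _ -> _).
by apply: DiffDef; [exact: linear_differentiable | exact: diff_lin].
Qed.

Ltac is_diff_step := lazymatch goal with
| |- is_diff_def _ (fun y => @GRing.add _ (@?f y) (@?g y)) _ =>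
    refine (is_diffD (f:=f) (g:=g) _ _)
| |- is_diff_def _ (fun y => @GRing.opp _ (@?f y)) _ => refine (is_diffN (f:=f) _)
| |- is_diff_def _ (fun y => @GRing.mul _ (@?f y) (@?g y)) _ =>
    refine (is_diffM (f:=f) (g:=g) _ _)
| |- is_diff_def _ (fun y => @GRing.exp _ (@?f y) 2) _ => refine (is_diffX (f:=f) 1 _)
| |- is_diff_def _ (fun y => coord4 y ?k) _ => refine (@is_diff_coord4 _ k)
| |- is_diff_def _ (fun y => ?a) _ => refine (is_diff_cst a _)
end.

Ltac is_diff_rec := repeat is_diff_step.

Lemma differentiable_Zof x : coord4 x 2 ^+ 2 + coord4 x 3 ^+ 2 < 4^-1 -> differentiable Zof x.
Proof.
move=> inside; pose g (p : 'rV[R]_4) : R := 4^-1 - coord4 p 2 ^+ 2 - coord4 p 3 ^+ 2.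
have [dg g_diff] : exists dg, is_diff x g dg by eexists; rewrite /g; is_diff_rec.
have sqrt_diff : differentiable (@Num.sqrt R) (g x).
  by apply/derivable1_diffP/ex_derive/is_derive1_sqrt; rewrite /g; lra.
by apply: differentiableN; apply: differentiable_comp.
Qed.

Lemma is_diff_row4 (V : normedModType R) (f0 f1 f2 f3 df0 df1 df2 df3 : V -> R) (x : V) :
  is_diff x f0 df0 -> is_diff x f1 df1 -> is_diff x f2 df2 -> is_diff x f3 df3 ->
  is_diff x (fun p => \row_(i < 4) nth 0 [:: f0 p; f1 p; f2 p; f3 p] i)
    (fun v => \row_(i < 4) nth 0 [:: df0 v; df1 v; df2 v; df3 v] i).
Proof.
move=> d0 d1 d2 d3; pose e k : 'rV[R]_4 := delta_mx 0 (inord k).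
have row4E a0 a1 a2 a3 : \row_(i < 4) nth 0 [:: a0; a1; a2; a3] i =
    a0 *: e 0 + a1 *: e 1 + a2 *: e 2 + a3 *: e 3.
  by apply/rowP => -[[|[|[|[|i]]]] lt_i4]; rewrite !mxE -?val_eqE /= ?inordK //=; ring.
have scale (f df : V -> R) k :
    is_diff x f df -> is_diff x (fun p => f p *: e k) (fun v => df v *: e k).
  by move=> f_diff; exact: is_diff_comp f_diff (is_diff_scalel (f x) (e k)).
apply: is_diff_eq; last by apply/funext => v; rewrite row4E.
rewrite (_ : (fun p => _) = (fun p => f0 p *: e 0 + f1 p *: e 1 + f2 p *: e 2 + f3 p *: e 3)).
  exact: is_diffD (is_diffD (is_diffD (scale _ _ _ d0) (scale _ _ _ d1)) (scale _ _ _ d2))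
    (scale _ _ _ d3).
by apply/funext => p; rewrite row4E.
Qed.

Lemma coord4_0 k : coord4 (0 : 'rV[R]_4) k = 0.
Proof. by rewrite /coord4 mxE. Qed.

Lemma coord4_delta (i : 'I_4) k : coord4 (delta_mx 0 i : 'rV[R]_4) k = (i == inord k)%:R.
Proof. by rewrite /coord4 mxE eqxx eq_sym. Qed.

Lemma Zof0 : Zof (0 : 'rV[R]_4) = - 2^-1.
Proof.
rewrite /Zof !coord4_0 expr0n /= !subr0 (_ : 4^-1 = 2^-1 ^+ 2); last by field.
by rewrite sqrtr_sqr ger0_norm // invr_ge0 ler0n.
Qed.

Variables wa wc kappa lambda N K : R.

Lemma rabi_field0 : rabi_field wa wc kappa lambda N K 0 = 0.
Proof. by apply/rowP => -[[|[|[|[|j]]]] lt_j4]; rewrite !mxE /= ?coord4_0 ?nth_nil; ring. Qed.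

(* [Q] vanishes at the origin, so the derivative of [Z] never enters. *)
Lemma jacobian_rabi_field_gen (c : R) (Z : 'rV[R]_4 -> R) : differentiable Z 0 ->
  jacobian (fun p => \row_(i < 4) nth 0
    [:: wc * coord4 p 1 - kappa * coord4 p 0
          + K * N * coord4 p 1 * (coord4 p 0 ^+ 2 + coord4 p 1 ^+ 2);
        - wc * coord4 p 0 - kappa * coord4 p 1 - c * coord4 p 2
          - K * N * coord4 p 0 * (coord4 p 0 ^+ 2 + coord4 p 1 ^+ 2);
        - wa * coord4 p 3;
        wa * coord4 p 2 - c * Z p * coord4 p 0] i) 0 =
  jac_mx wa wc kappa c (Z 0).
Proof.
move=> Z_diff; set f := (X in jacobian X _ = _).
evar (df : 'rV[R]_4 -> 'rV[R]_4).
have f_diff : is_diff 0 f df.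
  by rewrite /f /df; apply: is_diff_row4; is_diff_rec; exact: differentiableP.
rewrite /jacobian (@diff_val _ _ _ _ _ _ _ f_diff) /df.
apply/matrixP => -[[|[|[|[|i]]]] lt_i4] -[[|[|[|[|j]]]] lt_j4] //;
  rewrite !mxE /= !fctE /= !coord4_0 !coord4_delta /GRing.scale /= -?val_eqE /= ?inordK //=; ring.
Qed.

Lemma jacobian_rabi_field :
  jacobian (rabi_field wa wc kappa lambda N K) 0 =
  jac_mx wa wc kappa (2 * Num.sqrt 2 * lambda) (Zof 0).
Proof.
apply: jacobian_rabi_field_gen.
by apply: differentiable_Zof; rewrite !coord4_0 expr0n /= addr0 invr_gt0 ltr0n.
Qed.

End RabiJacobian.

Theorem mainTheorem1 (R : realType) (wa wc kappa lambda N K : R) :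
  0 < wa -> 0 < wc -> 0 < kappa -> 0 < lambda -> 0 < N ->
  rabi_field wa wc kappa lambda N K 0 = 0 /\
  ((forall z : R[i],
      eigenvalue (map_mx (fun x : R => (x%:C)%C)
                   (jacobian (rabi_field wa wc kappa lambda N K) 0)) z ->
      complex.Re z < 0)
   <-> 4 * lambda ^+ 2 / (wa * wc) < 1 + (kappa / wc) ^+ 2).
Proof.
move=> wa_gt0 wc_gt0 kappa_gt0 lambda_gt0 _; split; first exact: rabi_field0.
set c := 2 * Num.sqrt 2 * lambda; pose M := 4 * wa * wc * lambda ^+ 2.
have c_gt0 : 0 < c by rewrite !mulr_gt0 // sqrtr_gt0 ltr0n.
have M_gt0 : 0 < M by rewrite !mulr_gt0 // exprn_gt0.
have ME : - (wa * wc * c ^+ 2 * Zof 0) = M.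
  by rewrite Zof0 /M /c !exprMn sqr_sqrtr ?ler0n //; field.
have eigenE z : eigenvalue (map_mx (fun x : R => (x%:C)%C)
    (jacobian (rabi_field wa wc kappa lambda N K) 0)) z <->
    rabi_quartic (kappa%:C)%C (wa%:C)%C (wc%:C)%C z = (M%:C)%C.
  rewrite jacobian_rabi_field map_jac_mx eigenvalue_jac_mx ?fmorph_eq0 ?gt_eqF //.
  by rewrite -ME !(rmorphN, rmorphM, rmorphXn).
have condE : M < rabi_quartic kappa wa wc 0 <->
    4 * lambda ^+ 2 / (wa * wc) < 1 + (kappa / wc) ^+ 2.
  have gap : rabi_quartic kappa wa wc 0 - M =
      (wa * wc) ^+ 2 * (1 + (kappa / wc) ^+ 2 - 4 * lambda ^+ 2 / (wa * wc)).
    by rewrite /rabi_quartic /M; field; rewrite !gt_eqF.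
  by rewrite -subr_gt0 gap pmulr_rgt0 ?exprn_gt0 ?mulr_gt0 // subr_gt0.
apply: (iff_trans _ (iff_trans (rabi_quartic_roots_Re_lt0 wc kappa_gt0 wa_gt0 M_gt0) condE)).
by split => stable z /eigenE /stable.
Qed.
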